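(* Let $\mu$ be any example distribution. If $\mu$ has finite support, then $\preceq^{\mu}$ is well-founded. This does not necessarily hold when $\mu$ has infinite support: there exists an example distribution $\mu$ with infinite support such that $\preceq^{\mu}$ is not well-founded.
   Context: Data examples are pairs $(I,\mathbf a)$ with $I$ a finite database instance and $\mathbf a$ a tuple of its values. CQs are $q(x_1,\dots,x_k)\text{ :- }\alpha_1,\dots,\alpha_n$ (relational atoms, no constants, each answer variable in some atom); $[\![q]\!]$ is the set of data examples $(I,\mathbf a)$ with $\mathbf a\in q(I)$. An example distribution is a discrete probability distribution $\mu$ over data examples. $\mathrm{dist}_\mu(q,q')=\mu([\![q]\!]\oplus[\![q']\!])$ ($\oplus$ symmetric difference), i.e. the probability of drawing an example on which $q$ and $q'$ disagree. $q'\preceq^{\mu}_q q''$ iff $\mathrm{dist}_\mu(q,q')\le\mathrm{dist}_\mu(q,q'')$. The pre-order family $\preceq^\mu$ is well-founded if for every CQ $q$, every non-empty set of CQs has a $\preceq^\mu_q$-minimal element (equivalently, there is no infinite strictly descending chain $\cdots\prec_q q_2\prec_q q_1\prec_q q_0$, where $\prec_q$ is the strict part of $\preceq^\mu_q$). *)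

From Stdlib Require Import Reals List Arith ClassicalEpsilon.
From Coquelicot Require Import Coquelicot.
Import ListNotations.
Open Scope R_scope.

(** A schema: relation symbol [r] (a natural number [r < length sch])
    has arity [nth r sch 0]. *)
Definition schema := list nat.

Definition value := nat.
Definition var := nat.

Definition fact := (nat * list value)%type.
Definition atom := (nat * list var)%type.

Definition well_typed (sch : schema) (f : nat * list nat) : Prop :=
  (fst f < length sch)%nat /\ length (snd f) = nth (fst f) sch 0%nat.

Definition instance := list fact.
Definition wf_instance (sch : schema) (I : instance) : Prop :=
  forall f, In f I -> well_typed sch f.

Definition in_adom (I : instance) (v : value) : Prop :=
  exists f, In f I /\ In v (snd f).

Definition data_example := (instance * list value)%type.
Definition wf_example (sch : schema) (e : data_example) : Prop :=
  wf_instance sch (fst e) /\ forall v, In v (snd e) -> in_adom (fst e) v.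

(** Conjunctive query q(x_1..x_k) :- alpha_1, ..., alpha_n :
    answer variables, list of relational atoms (no constants). *)
Record CQ := mkCQ { cq_ans : list var; cq_body : list atom }.

Definition wf_CQ (sch : schema) (q : CQ) : Prop :=
  cq_body q <> [] /\
  (forall at_, In at_ (cq_body q) -> well_typed sch at_) /\
  (forall x, In x (cq_ans q) -> exists at_, In at_ (cq_body q) /\ In x (snd at_)).

Definition answer (q : CQ) (I : instance) (a : list value) : Prop :=
  exists h : var -> value,
    map h (cq_ans q) = a /\
    forall at_, In at_ (cq_body q) -> In (fst at_, map h (snd at_)) I.

Definition denot (q : CQ) (e : data_example) : Prop := answer q (fst e) (snd e).

(** A discrete probability distribution over (well-formed) data examples,
    presented by a countable enumeration [ex] of data examples with weights
    [w] (nonnegative, summing to 1).  The probability of e is the sum of the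
    weights w n with ex n = e.  Every discrete distribution arises this way. *)
Record ExDist (sch : schema) := mkExDist {
  ex : nat -> data_example;
  w : nat -> R;
  w_nonneg : forall n, 0 <= w n;
  w_sum : is_series w 1;
  ex_wf : forall n, wf_example sch (ex n)
}.
Arguments ex {sch}.
Arguments w {sch}.

Definition indicator (P : Prop) : R :=
  if excluded_middle_informative P then 1 else 0.

Definition prob {sch} (mu : ExDist sch) (A : data_example -> Prop) : R :=
  Series (fun n => w mu n * indicator (A (ex mu n))).

Definition in_support {sch} (mu : ExDist sch) (e : data_example) : Prop :=
  exists n, 0 < w mu n /\ ex mu n = e.

Definition finite_support {sch} (mu : ExDist sch) : Prop :=
  exists L : list data_example, forall e, in_support mu e -> In e L.

Definition dist {sch} (mu : ExDist sch) (q q' : CQ) : R :=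
  prob mu (fun e => ~ (denot q e <-> denot q' e)).

Definition preceq {sch} (mu : ExDist sch) (q q' q'' : CQ) : Prop :=
  dist mu q q' <= dist mu q q''.

Definition well_founded_family {sch} (mu : ExDist sch) : Prop :=
  forall q : CQ, wf_CQ sch q ->
  forall S : CQ -> Prop,
    (forall q', S q' -> wf_CQ sch q') ->
    (exists q', S q') ->
    exists m, S m /\
      forall q'', S q'' -> ~ (preceq mu q q'' m /\ ~ preceq mu q m q'').

(** With finite support [L], the probability of an event depends only on which
    elements of [L] it contains, so all distances lie in the finite set
    [{mu(B) | B ⊆ L}], and a non-empty family of CQs has one of minimal
    distance.  For the counterexample take one unary fact [R(0)] and the
    examples [e_n = (R(0), 0^n)] of weight [2^-(n+1)]: the query
    [q_k(x^k) :- R(x)] holds exactly on [e_k], so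
    [dist(q_0, q_k) = 1/2 + 2^-(k+1)] strictly decreases along [k >= 1]. *)

From Pilot Require Import Defs.
From Stdlib Require Import Reals List.
From Coquelicot Require Import Coquelicot.
From Stdlib Require Import RList Lia Lra ClassicalEpsilon.
Import ListNotations.
Open Scope R_scope.

Fixpoint sublists {A} (l : list A) : list (list A) :=
  match l with
  | [] => [[]]
  | x :: t => map (cons x) (sublists t) ++ sublists t
  end.

Lemma filter_in_sublists {A} (f : A -> bool) (l : list A) :
  In (filter f l) (sublists l).
Proof.
  induction l as [|x t IH]; simpl; auto.
  apply in_or_app. destruct (f x); [left; apply in_map|right]; exact IH.
Qed.

Definition asbool (P : Prop) : bool :=
  if excluded_middle_informative P then true else false.

Lemma asboolE (P : Prop) : asbool P = true <-> P.
Proof.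
  unfold asbool; destruct (excluded_middle_informative P); split; easy.
Qed.

Lemma exists_min_of_finite_range {A} (f : A -> R) (V : list R) (S : A -> Prop) :
  (forall a, S a -> In (f a) V) -> (exists a, S a) ->
  exists m, S m /\ forall a, S a -> f m <= f a.
Proof.
  intros HV [a0 Ha0].
  set (W := filter (fun x => asbool (exists a, S a /\ f a = x)) V).
  assert (HW : forall a, S a -> In (- f a) (map Ropp W)).
  { intros a Ha. apply in_map. unfold W. rewrite filter_In, asboolE. eauto. }
  destruct (in_map_iff Ropp W (MaxRlist (map Ropp W))) as [[x [Hx HxW]] _].
  { apply MaxRlist_P2. eauto. }
  unfold W in HxW. rewrite filter_In, asboolE in HxW.
  destruct HxW as [_ [m [Hm <-]]].
  exists m. split; [exact Hm|].
  intros a Ha. assert (H := MaxRlist_P1 _ _ (HW a Ha)). lra.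
Qed.

Lemma indicator_iff (P Q : Prop) : (P <-> Q) -> indicator P = indicator Q.
Proof.
  intros H; unfold indicator.
  destruct (excluded_middle_informative P), (excluded_middle_informative Q); tauto.
Qed.

Lemma prob_ext_support {sch} (mu : ExDist sch) (P Q : data_example -> Prop) :
  (forall e, in_support mu e -> (P e <-> Q e)) -> prob mu P = prob mu Q.
Proof.
  intros H. unfold prob. apply Series_ext. intros n.
  destruct (w_nonneg _ mu n) as [Hpos|Hzero].
  - rewrite (indicator_iff _ _ (H _ (ex_intro _ n (conj Hpos eq_refl)))).
    reflexivity.
  - rewrite <- Hzero. ring.
Qed.

Lemma prob_in_sublist_probs {sch} (mu : ExDist sch) (L : list data_example) :
  (forall e, in_support mu e -> In e L) ->
  forall P, In (prob mu P) (map (fun B => prob mu (fun e => In e B)) (sublists L)).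
Proof.
  intros HL P.
  replace (prob mu P)
    with (prob mu (fun e => In e (filter (fun e => asbool (P e)) L))).
  - apply (in_map (fun B => prob mu (fun e => In e B))), filter_in_sublists.
  - apply prob_ext_support. intros e He.
    rewrite filter_In, asboolE. specialize (HL e He). tauto.
Qed.

Lemma finite_support_well_founded (sch : schema) (mu : ExDist sch) :
  finite_support mu -> well_founded_family mu.
Proof.
  intros [L HL] q _ S _ HS.
  destruct (exists_min_of_finite_range (fun q' => Defs.dist mu q q') _ S
              (fun q' _ => prob_in_sublist_probs mu L HL _) HS)
    as [m [Hm Hmin]].
  exists m. split; [exact Hm|].
  intros q'' Hq'' [_ Hnot]. apply Hnot, Hmin, Hq''.
Qed.

Lemma finite_support_bounded_arity {sch} (mu : ExDist sch) :
  finite_support mu ->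
  exists M, forall n, 0 < w mu n -> (length (snd (ex mu n)) <= M)%nat.
Proof.
  intros [L HL]. exists (list_max (map (fun e => length (snd e)) L)).
  intros n Hn.
  assert (Hbound := proj1 (list_max_le (map (fun e => length (snd e)) L) _) (le_n _)).
  rewrite Forall_forall in Hbound. apply Hbound.
  apply (in_map (fun e => length (snd e))), HL.
  exists n. split; [exact Hn|reflexivity].
Qed.

Lemma descending_chain_not_well_founded {sch} (mu : ExDist sch) (q : CQ)
    (qs : nat -> CQ) :
  wf_CQ sch q -> (forall k, wf_CQ sch (qs k)) ->
  (forall k, Defs.dist mu q (qs (S k)) < Defs.dist mu q (qs k)) ->
  ~ well_founded_family mu.
Proof.
  intros Hq Hqs Hdesc Hwf.
  destruct (Hwf q Hq (fun q' => exists k, q' = qs k)) as [m [[k ->] Hmin]].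
  - intros q' [k ->]. apply Hqs.
  - exists (qs 0%nat). eauto.
  - apply (Hmin (qs (S k))); [eauto|].
    unfold preceq. specialize (Hdesc k). split; lra.
Qed.

Definition single (j : nat) (x : R) (n : nat) : R :=
  if Nat.eq_dec n j then x else 0.

Lemma sum_n_single j x N :
  sum_n (single j x) N = if Compare_dec.le_dec j N then x else 0.
Proof.
  unfold single. induction N as [|N IH].
  - rewrite sum_O. destruct (Nat.eq_dec 0 j), (Compare_dec.le_dec j 0); easy || lia.
  - rewrite sum_Sn, IH.
    destruct (Compare_dec.le_dec j N), (Nat.eq_dec (S N) j),
      (Compare_dec.le_dec j (S N)); try lia; unfold plus; simpl; ring.
Qed.

Lemma is_series_single j x : is_series (single j x) x.
Proof.
  change (is_lim_seq (sum_n (single j x)) x).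
  apply (is_lim_seq_ext_loc (fun _ => x)); [|apply is_lim_seq_const].
  exists j. intros n Hn. rewrite sum_n_single.
  destruct (Compare_dec.le_dec j n); [reflexivity|lia].
Qed.

Definition half_pow (n : nat) : R := (1/2) ^ S n.

Lemma half_pow_pos n : 0 < half_pow n.
Proof. apply pow_lt. lra. Qed.

Lemma half_pow_decr n : half_pow (S n) < half_pow n.
Proof.
  unfold half_pow. rewrite <- (tech_pow_Rmult _ (S n)).
  assert (H := pow_lt (1/2) (S n) ltac:(lra)). lra.
Qed.

Lemma is_series_half_pow : is_series half_pow 1.
Proof.
  assert (Hgeom := is_series_scal (1/2) _ _
                     (is_series_geom (1/2) ltac:(rewrite Rabs_pos_eq; lra))).
  replace 1 with (scal (1/2) (/ (1 - 1/2)))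
    by (unfold scal; simpl; unfold mult; simpl; field).
  exact Hgeom.
Qed.

Definition unary_schema : schema := [1%nat].
Definition unit_instance : instance := [(0%nat, [0%nat])].
Definition zeros_example (n : nat) : data_example := (unit_instance, repeat 0%nat n).

Lemma zeros_example_wf n : wf_example unary_schema (zeros_example n).
Proof.
  split.
  - intros f [<-|[]]. split; simpl; auto.
  - intros v Hv. apply repeat_spec in Hv. subst.
    exists (0%nat, [0%nat]). simpl. auto.
Qed.

Definition zeros_dist : ExDist unary_schema :=
  mkExDist unary_schema zeros_example half_pow
    (fun n => Rlt_le _ _ (half_pow_pos n)) is_series_half_pow zeros_example_wf.

Definition zeros_query (k : nat) : CQ := mkCQ (repeat 0%nat k) [(0%nat, [0%nat])].

Lemma zeros_query_wf k : wf_CQ unary_schema (zeros_query k).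
Proof.
  split; [discriminate|]. split.
  - intros a [<-|[]]. split; simpl; auto.
  - intros x Hx. apply repeat_spec in Hx. subst.
    exists (0%nat, [0%nat]). simpl. auto.
Qed.

Lemma denot_zeros_query k n : denot (zeros_query k) (zeros_example n) <-> k = n.
Proof.
  unfold denot, answer; simpl. split.
  - intros [h [Hmap _]]. apply (f_equal (@length nat)) in Hmap.
    now rewrite length_map, !repeat_length in Hmap.
  - intros <-. exists (fun _ => 0%nat). rewrite map_repeat.
    split; [reflexivity|]. intros a [<-|[]]. simpl. auto.
Qed.

Lemma dist_zeros_query k : (1 <= k)%nat ->
  Defs.dist zeros_dist (zeros_query 0) (zeros_query k) = half_pow 0 + half_pow k.
Proof.
  intros Hk. apply is_series_unique.
  apply (is_series_ext (fun n => plus (single 0 (half_pow 0) n) (single k (half_pow k) n)));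
    [|exact (is_series_plus _ _ _ _ (is_series_single _ _) (is_series_single _ _))].
  intros n. unfold plus, single, indicator; simpl.
  destruct (excluded_middle_informative _) as [H|H];
    rewrite !denot_zeros_query in H;
    destruct (Nat.eq_dec n 0), (Nat.eq_dec n k); subst; try lia; try ring;
    exfalso; apply H; lia.
Qed.

Lemma zeros_dist_infinite_support : ~ finite_support zeros_dist.
Proof.
  intros Hfin. destruct (finite_support_bounded_arity _ Hfin) as [M HM].
  specialize (HM (S M) (half_pow_pos _)). simpl in HM.
  rewrite repeat_length in HM. lia.
Qed.

Lemma zeros_dist_not_well_founded : ~ well_founded_family zeros_dist.
Proof.
  apply (descending_chain_not_well_founded _ (zeros_query 0)
           (fun k => zeros_query (S k))).
  - apply zeros_query_wf.
  - intros k. apply zeros_query_wf.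
  - intros k. rewrite !dist_zeros_query by lia.
    assert (H := half_pow_decr (S k)). lra.
Qed.

Theorem proposition52 :
  (forall (sch : schema) (mu : ExDist sch),
      finite_support mu -> well_founded_family mu) /\
  (exists (sch : schema) (mu : ExDist sch),
      ~ finite_support mu /\ ~ well_founded_family mu).
Proof.
  split.
  - exact finite_support_well_founded.
  - exists unary_schema, zeros_dist.
    split; [exact zeros_dist_infinite_support | exact zeros_dist_not_well_founded].
Qed.
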